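(* Let $X$ be a Banach space with a normalized $1$-unconditional basis $(e_i)_i$ not equivalent to the standard basis of $c_0$, let $q\le p$ in $[1,\infty]$, $q<\infty$, be such that $X$ satisfies lower $p$ and upper $q$ estimates on block sequences with constant one, and let $X_k=\mathrm{span}\{e_1,\dots,e_k\}$. Fix $d\in\mathbb{N}$ and $0<\varepsilon\le1$. Let $P\subseteq\mathbb{N}$ and $M=\{k_j\}_{j=1}^\infty\subseteq\mathbb{N}$ satisfy Assumption $A(d,\varepsilon/4)$. Then for all $\bar m\in[\{k_{2j}\}_{j=1}^\infty]^d$, all $k\in\{k_{2j}\}_{j=1}^\infty$ with $k>m_d$, and all step preserving maps $F\colon S^+_{\ell_\infty^k}\to S^+_{X_k}$ with $\omega_F(\tfrac1d)\le\tfrac\varepsilon8$, we have \[\Big\|F(z(\bar m))-\frac1{\psi(k)}\sum_{i=1}^ke_i\Big\|_X\le\varepsilon.\]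
   Context: Identify $X_k$ with $\mathbb{R}^k$ via $(e_i)$; $1_A=\sum_{i\in A}e_i$, $1_{(a,b]}=1_{\{i:a<i\le b\}}$. $S^+_{\ell_\infty^k}=\{x\in\mathbb{R}^k:\|x\|_\infty=1,x_i\ge0\}$, $S^+_{X_k}=\{\sum_{i\le k}a_ie_i:\|\cdot\|_X=1,a_i\ge0\}$. $\psi(k)=\|1_{[1,k]}\|_X$; $\psi_P(k)=\min\{\|1_{[1,k]\cap P}\|_X,\|1_{[1,k]\cap P^c}\|_X\}$. Lower $p$/upper $q$ estimates with constant one: $(\sum\|x_i\|^p)^{1/p}\le\|\sum x_i\|\le(\sum\|x_i\|^q)^{1/q}$ for every block sequence. Assumption $A(d,\varepsilon)$ for $P$ and $M=\{k_j\}$ ($k_1<k_2<\cdots$): (i) $\psi_P(k)\ge\frac12(\psi(k)-1)$ for all $k$; (ii) $(k_j,k_{j+1}]$ meets both $P$ and $P^c$ for all $j$; (iii) $\psi(k_{j+1})\ge(\frac{8d^{1/q-1/p}}{\varepsilon}+2)\psi(k_j)+1$. $[S]^d$ denotes increasing $d$-tuples from $S$; with $m_0=0$, $z(\bar m)=\sum_{s=1}^d(1-\frac{s-1}{d})1_{(m_{s-1},m_s]}$. $F=(F_i)$ is step preserving if $x_i=x_j$ implies $F_i(x)=F_j(x)$. $\omega_F(t)=\sup\{\|F(x)-F(y)\|_X:\|x-y\|_\infty\le t\}$. *)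

From HB Require Import structures.
From mathcomp Require Import all_boot all_order all_algebra.
From mathcomp Require Import all_classical all_reals.
From mathcomp Require Import exp.
Set Implicit Arguments. Unset Strict Implicit. Unset Printing Implicit Defensive.
Import Order.TTheory GRing.Theory Num.Theory.
Local Open Scope ring_scope.

(* Vectors are finitely supported real sequences indexed from 1
   (coordinate 0 is unused and must vanish); x i is the coefficient of e_i.
   The Banach space X is the completion of c00 for the norm N. *)
Section Defs.
Variable R : realType.
Implicit Types (x y : nat -> R) (N : (nat -> R) -> R).

Definition supported_in (n : nat) x := forall i, (i == 0%N) || (n < i)%N -> x i = 0.
Definition c00 x := exists n, supported_in n x.

Definition unitv (i : nat) : nat -> R := fun j => if j == i then 1 else 0.
Definition ind (A : nat -> bool) : nat -> R :=
  fun i => if (0 < i)%N && A i then 1 else 0.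
Definition ind_oc (a b : nat) : nat -> R := ind (fun i => (a < i <= b)%N).

Definition supn (k : nat) x : R := \big[Num.max/0]_(1 <= i < k.+1) `|x i|.

Definition is_norm_c00 N :=
  [/\ forall x, c00 x -> 0 <= N x,
      forall x, c00 x -> N x = 0 -> forall i, x i = 0,
      forall (a : R) x, c00 x -> N (fun i => a * x i) = `|a| * N x &
      forall x y, c00 x -> c00 y -> N (fun i => x i + y i) <= N x + N y].

Definition normalized_basis N := forall i, (0 < i)%N -> N (unitv i) = 1.

Definition one_unconditional N :=
  forall (eps : nat -> R) x, c00 x -> (forall i, eps i = 1 \/ eps i = -1) ->
    N (fun i => eps i * x i) = N x.

Definition equiv_c0 N := exists c C : R, 0 < c /\ 0 < C /\
  forall n x, supported_in n x -> c * supn n x <= N x /\ N x <= C * supn n x.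

Definition block_seq (xs : seq (nat -> R)) :=
  (forall x, x \in xs -> c00 x) /\
  forall i j, (i < j < size xs)%N -> forall a b,
    nth (fun _ => 0) xs i a != 0 -> nth (fun _ => 0) xs j b != 0 -> (a < b)%N.

Definition sumv (xs : seq (nat -> R)) : nat -> R := fun a => \sum_(x <- xs) x a.

Definition lp_norm (p : \bar R) (s : seq R) : R :=
  match p with
  | EFin r => (\sum_(a <- s) a `^ r) `^ r^-1
  | _ => \big[Num.max/0]_(a <- s) a
  end.

Definition inv_ext (p : \bar R) : R := match p with EFin r => r^-1 | _ => 0 end.

Definition lower_estimate N (p : \bar R) :=
  forall xs, block_seq xs -> lp_norm p (map N xs) <= N (sumv xs).
Definition upper_estimate N (q : R) :=
  forall xs, block_seq xs -> N (sumv xs) <= lp_norm q%:E (map N xs).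

Definition psi N (k : nat) : R := N (ind (fun i => (i <= k)%N)).
Definition psiP N (P : nat -> bool) (k : nat) : R :=
  Num.min (N (ind (fun i => (i <= k)%N && P i)))
          (N (ind (fun i => (i <= k)%N && ~~ P i))).

(* Assumption A(d, eps) for P and M = {k_j}_{j>=1} (k : nat -> nat, used at j >= 1) *)
Definition assumptionA N (p : \bar R) (q : R) (d : nat) (eps : R)
    (P : nat -> bool) (k : nat -> nat) :=
  [/\ forall n, psiP N P n >= (psi N n - 1) / 2,
      forall j, (1 <= j)%N ->
        (exists i, [&& (k j < i)%N, (i <= k j.+1)%N & P i]) /\
        (exists i, [&& (k j < i)%N, (i <= k j.+1)%N & ~~ P i]) &
      forall j, (1 <= j)%N ->
        psi N (k j.+1) >=
          (8 * (d%:R `^ (q^-1 - inv_ext p)) / eps + 2) * psi N (k j) + 1].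

(* z(m) = sum_{s=1}^d (1 - (s-1)/d) 1_(m_{s-1}, m_s], with m_0 = 0 *)
Definition zvec (d : nat) (m : nat -> nat) : nat -> R :=
  fun i => \sum_(1 <= s < d.+1)
     (1 - (s.-1)%:R / d%:R) * ind_oc (if s == 1%N then 0%N else m s.-1) (m s) i.

Definition Splus_linf (k : nat) x :=
  [/\ supported_in k x, forall i, 0 <= x i & supn k x = 1].
Definition Splus_X N (k : nat) x :=
  [/\ supported_in k x, forall i, 0 <= x i & N x = 1].

Definition maps_into N k (F : (nat -> R) -> (nat -> R)) :=
  forall x, Splus_linf k x -> Splus_X N k (F x).

Definition step_preserving k (F : (nat -> R) -> (nat -> R)) :=
  forall x, Splus_linf k x -> forall i j, (1 <= i <= k)%N -> (1 <= j <= k)%N ->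
    x i = x j -> F x i = F x j.

(* omega_F(t) <= c, i.e. sup{ ||F x - F y|| : ||x - y||_oo <= t } <= c *)
Definition omega_le N k (F : (nat -> R) -> (nat -> R)) (t c : R) :=
  forall x y, Splus_linf k x -> Splus_linf k y ->
    supn k (fun i => x i - y i) <= t -> N (fun i => F x i - F y i) <= c.

End Defs.

From HB Require Import structures.
From mathcomp Require Import all_boot all_order all_algebra.
From mathcomp Require Import all_classical all_reals.
From mathcomp Require Import exp.
From mathcomp Require Import ring lra.
Import Order.TTheory GRing.Theory Num.Theory.
Local Open Scope ring_scope.
Set Implicit Arguments. Unset Strict Implicit. Unset Printing Implicit Defensive.

(* Pad m to breakpoints 0 = L 0 < L 1 < ... < L d < L (d+1) = k.  On the block
   (L t, L (t+1)] the vector z = z(m) equals 1 - t/d, so F(z) is constant there,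
   say alpha t; put h = F(z) - alpha d 1_[1,k].  For Q = P and Q = P^c, raising z by
   1/d on the points of Q^c outside the first block gives z_Q with
   |z_Q - z|_oo <= 1/d that is constant on (block t & Q) | (block (t+1) & ~Q), hence
   so is F(z_Q), and g = F(z_Q) - F(z) has norm at most eps/8.  On Q, h is -g plus
   two step vectors carried by the blocks t & Q.  Moving each coefficient one block
   to the right costs a factor eps/16, by the upper q / lower p estimates and the
   growth of psi along the breakpoints, and turns these step vectors into pieces of
   g and of h 1_Q.  Thus |h 1_Q| <= eps/8 + eps/16 (eps/8 + |h 1_Q|), so
   |h 1_Q| <= eps/4 and |h| <= eps/2; normalizing F(z) to 1_[1,k] / psi(k) at most
   doubles this distance. *)

Lemma notin_range i n : ~~ (0 < i <= n)%N = (i == 0%N) || (n < i)%N.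
Proof. by rewrite negb_and -leqNgt -ltnNge leqn0. Qed.

Section C00.
Variable R : realType.
Implicit Types (x y : nat -> R) (A B : nat -> bool).

Lemma c00_add x y : c00 x -> c00 y -> c00 (fun i => x i + y i).
Proof.
move=> [a xa] [b yb]; exists (maxn a b) => i /orP[/eqP->|lt_i].
  by rewrite xa ?yb ?addr0.
rewrite xa ?yb ?addr0 //; apply/orP; right; apply: leq_ltn_trans lt_i.
  exact: leq_maxr.
exact: leq_maxl.
Qed.

Lemma c00_scale a x : c00 x -> c00 (fun i => a * x i).
Proof. by move=> [n xn]; exists n => i /xn ->; rewrite mulr0. Qed.

Lemma c00_opp x : c00 x -> c00 (fun i => - x i).
Proof. by move=> [n xn]; exists n => i /xn ->; rewrite oppr0. Qed.

Lemma c00_sub x y : c00 x -> c00 y -> c00 (fun i => x i - y i).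
Proof. by move=> cx /c00_opp; apply: c00_add. Qed.

Lemma c00_sumv xs : (forall x, x \in xs -> c00 x) -> c00 (sumv xs).
Proof.
elim: xs => [_|x xs IHxs xs_c00]; first by exists 0%N => i _; rewrite /sumv big_nil.
have -> : sumv (x :: xs) = fun i => x i + sumv xs i.
  by apply/funext => i; rewrite /sumv big_cons.
apply: c00_add; first by apply: xs_c00; rewrite mem_head.
by apply: IHxs => y y_xs; apply: xs_c00; rewrite in_cons y_xs orbT.
Qed.

Lemma c00_restrict A x : c00 x -> c00 (fun i => if A i then x i else 0).
Proof. by move=> [n xn]; exists n => i /xn ->; case: (A i). Qed.

Lemma c00_ind n A : (forall i, A i -> (i <= n)%N) -> c00 (ind R A).
Proof.
move=> An; exists n => i /orP[/eqP->|lt_ni]; rewrite /ind //.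
by case: ifP => // /andP[_ /An]; rewrite leqNgt lt_ni.
Qed.

Lemma c00_ind_block a b Q : c00 (ind R (fun j => (a < j <= b)%N && Q j)).
Proof. by apply: (@c00_ind b) => i /andP[/andP[_ ->]]. Qed.

Lemma ind_restrict A B : (forall i, A i -> B i) ->
  ind R A = (fun i => if A i then ind R B i else 0).
Proof.
move=> AB; apply/funext => i; rewrite /ind.
by case: (boolP (A i)) => [/AB ->|_]; rewrite ?andbF.
Qed.

End C00.

Section Norm.
Variables (R : realType) (N : (nat -> R) -> R).
Hypothesis HN : is_norm_c00 N.
Implicit Types (x y : nat -> R) (A B : nat -> bool).

Lemma N_ge0 x : c00 x -> 0 <= N x.
Proof. by case: HN => + _ _ _; apply. Qed.

Lemma N_scale a x : c00 x -> N (fun i => a * x i) = `|a| * N x.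
Proof. by case: HN => _ _ + _; apply. Qed.

Lemma N_add_le x y : c00 x -> c00 y -> N (fun i => x i + y i) <= N x + N y.
Proof. by case: HN => _ _ _; apply. Qed.

Lemma N_opp x : c00 x -> N (fun i => - x i) = N x.
Proof.
move=> cx; rewrite -[RHS]mul1r -(normrN1 R) -N_scale //.
by congr N; apply/funext => i; rewrite mulN1r.
Qed.

Lemma N_sub_le x y : c00 x -> c00 y -> N (fun i => x i - y i) <= N x + N y.
Proof.
by move=> cx cy; rewrite -[N y](N_opp cy); apply/N_add_le/c00_opp.
Qed.

Lemma N_dist_ge x y : c00 x -> c00 y -> `|N x - N y| <= N (fun i => x i - y i).
Proof.
move=> cx cy; have cxy := c00_sub cx cy.
have := N_add_le cxy cy; have := N_add_le (c00_scale (-1) cxy) cx.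
rewrite N_scale // normrN1 mul1r.
have -> : (fun i => x i - y i + y i) = x by apply/funext => i; rewrite subrK.
have -> : (fun i => -1 * (x i - y i) + x i) = y.
  by apply/funext => i; rewrite mulN1r opprB subrK.
by move=> ? ?; rewrite ler_norml; apply/andP; split; lra.
Qed.

Lemma psi_ge0 n : 0 <= psi N n.
Proof. by apply/N_ge0/(@c00_ind _ n). Qed.

Lemma N_sub_normalized_le y u a : c00 y -> c00 u -> N y = 1 -> 0 < N u -> 0 <= a ->
  N (fun i => y i - (N u)^-1 * u i) <= 2 * N (fun i => y i - a * u i).
Proof.
move=> cy cu Ny1 Nu0 a0; have cau := c00_scale a cu.
have -> : (fun i => y i - (N u)^-1 * u i) =
          (fun i => (y i - a * u i) + (a - (N u)^-1) * u i).
  by apply/funext => i; ring.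
apply: le_trans (N_add_le (c00_sub cy cau) (c00_scale _ cu)) _.
rewrite N_scale //; have -> : `|a - (N u)^-1| * N u = `|a * N u - 1|.
  by rewrite -[X in _ * X](gtr0_norm Nu0) -normrM mulrBl mulVf ?gt_eqF.
have := N_dist_ge cy cau; rewrite N_scale // Ny1 (ger0_norm a0) distrC.
lra.
Qed.

Hypothesis HU : one_unconditional N.

Lemma N_restrict_le A x : c00 x -> N (fun i => if A i then x i else 0) <= N x.
Proof.
move=> cx; pose sgn i : R := if A i then 1 else -1.
have sgn_pm i : sgn i = 1 \/ sgn i = -1 by rewrite /sgn; case: (A i); [left|right].
have csx : c00 (fun i => sgn i * x i).
  by case: cx => n xn; exists n => i /xn ->; rewrite mulr0.
have -> : (fun i => if A i then x i else 0) = fun i => 2^-1 * (x i + sgn i * x i).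
  by apply/funext => i; rewrite /sgn; case: (A i); lra.
rewrite N_scale; last exact: c00_add.
rewrite ger0_norm ?invr_ge0 ?ler0n //.
have := N_add_le cx csx; rewrite HU //; have := N_ge0 cx; lra.
Qed.

Lemma N_ind_le A B n : (forall i, A i -> B i) -> (forall i, B i -> (i <= n)%N) ->
  N (ind R A) <= N (ind R B).
Proof. by move=> AB Bn; rewrite (ind_restrict R AB); apply/N_restrict_le/c00_ind/Bn. Qed.

Lemma psi_ge1 n : normalized_basis N -> (0 < n)%N -> 1 <= psi N n.
Proof.
move=> Hbas n0; rewrite /psi -(Hbas 1%N) //.
have -> : unitv R 1 = ind R (pred1 1%N).
  by apply/funext => i; rewrite /unitv /ind /=; case: eqP => [->|_]; rewrite ?andbF.
by apply: (N_ind_le (n := n)) => i // /eqP ->.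
Qed.

Definition half_psi (Q : pred nat) :=
  forall n, (psi N n - 1) / 2 <= N (ind R (fun i => (i <= n)%N && Q i)).

Lemma psi_gap_le Q c a b : half_psi Q -> (a <= b)%N -> 0 < c ->
  (2 / c + 2) * psi N a + 1 <= psi N b ->
  psi N a <= c * N (ind R (fun i => (a < i <= b)%N && Q i)).
Proof.
move=> HQ ab c0 grow; have := HQ b.
have -> : ind R (fun i => (i <= b)%N && Q i) =
          (fun i => ind R (fun i => (a < i <= b)%N && Q i) i +
                    ind R (fun i => (i <= a)%N && Q i) i).
  apply/funext => i; rewrite /ind; case: (Q i); rewrite ?andbT ?andbF ?addr0 //.
  case: (0 < i)%N; rewrite /= ?addr0 //.
  case: leqP => [ia|_]; last by rewrite addr0.
  by rewrite (leq_trans ia ab) add0r.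
have le_a : N (ind R (fun i => (i <= a)%N && Q i)) <= psi N a.
  by apply: (N_ind_le (n := a)) => [i /andP[]|].
have c1 : c00 (ind R (fun i => (a < i <= b)%N && Q i)).
  by apply: (@c00_ind _ b) => i /andP[/andP[]].
have c2 : c00 (ind R (fun i => (i <= a)%N && Q i)).
  by apply: (@c00_ind _ a) => i /andP[].
move=> half; rewrite -ler_pdivrMl //; have := N_add_le c1 c2; lra.
Qed.

End Norm.

Section PowerMean.
Variable R : realType.

Lemma powR_amgm (a b t : R) : 0 <= a -> 0 <= b -> 0 < t <= 1 ->
  a `^ t * b `^ (1 - t) <= t * a + (1 - t) * b.
Proof.
move=> a0 b0 /andP[t0 t1]; have [->|t_neq1] := eqVneq t 1.
  by rewrite subrr powRr0 powRr1 // mulr1 mul1r mul0r addr0.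
have u0 : 0 < 1 - t by rewrite subr_gt0 lt_neqAle t_neq1 t1.
have := @conjugate_powR R (a `^ t) (b `^ (1 - t)) t^-1 (1 - t)^-1 (powR_ge0 _ _)
  (powR_ge0 _ _) (eqbRL (invr_gt0 _) t0) (eqbRL (invr_gt0 _) u0).
have conj : t^-1^-1 + (1 - t)^-1^-1 = 1 by rewrite !invrK addrC subrK.
move=> /(_ conj).
by rewrite -!powRrM !mulfV ?gt_eqF // !powRr1 // !invrK ![_ * t]mulrC ![_ * (1 - t)]mulrC.
Qed.

Lemma lp_norm_le_size (q r : R) (s : seq R) : 0 < q -> q <= r ->
  (forall a, a \in s -> 0 <= a) ->
  lp_norm q%:E s <= (size s)%:R `^ (q^-1 - r^-1) * lp_norm r%:E s.
Proof.
move=> q0 qr s0; have r0 : 0 < r := lt_le_trans q0 qr.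
rewrite /lp_norm; set n : R := (size s)%:R.
set S := \sum_(a <- s) a `^ r; set T := \sum_(a <- s) a `^ q.
have S0 : 0 <= S by apply: sumr_ge0 => a _; exact: powR_ge0.
have T0 : 0 <= T by apply: sumr_ge0 => a _; exact: powR_ge0.
have [S_eq0|S_neq0] := eqVneq S 0.
  have -> : T = 0.
    rewrite /T big_seq big1 // => a sa; rewrite (@powR_eq0_eq0 _ a r) ?powR0 ?gt_eqF //.
    move: S_eq0 => /eqP; rewrite psumr_eq0 => [/allP/(_ a sa)/implyP/(_ isT)/eqP //|b _].
    exact: powR_ge0.
  by rewrite powR0 ?invr_eq0 ?gt_eqF // mulr_ge0 ?powR_ge0.
have Spos : 0 < S by rewrite lt_neqAle eq_sym S_neq0.
have n0 : 0 < n.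
  by rewrite ltr0n lt0n size_eq0; apply: contraNneq S_neq0 => s_nil; rewrite /S s_nil big_nil.
set t := q / r; have t0 : 0 < t by rewrite divr_gt0.
have t1 : t <= 1 by rewrite ler_pdivrMr // mul1r.
(* Summing weighted AM-GM for a^r and the mean S/n gives T (S/n)^(1-t) <= S. *)
have amgm : T * (S / n) `^ (1 - t) <= S.
  rewrite /T mulr_suml.
  apply: le_trans (_ : \sum_(a <- s) (t * a `^ r + (1 - t) * (S / n)) <= _).
    rewrite big_seq [X in _ <= X]big_seq; apply: ler_sum => a sa.
    rewrite (_ : a `^ q = (a `^ r) `^ t); last first.
      by rewrite -powRrM /t mulrCA mulfV ?gt_eqF // mulr1.
    apply: powR_amgm; [exact: powR_ge0 | by rewrite divr_ge0 // ltW | by rewrite t0 t1].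
  rewrite big_split /= -mulr_sumr -/S big_const_seq count_predT iter_addr addr0.
  rewrite -mulr_natl -/n mulrCA [n * _]mulrC mulfVK ?gt_eqF //; lra.
have nt0 : 0 < n `^ (1 - t) by exact: powR_gt0.
have T_le : T <= n `^ (1 - t) * S `^ t.
  have Sn0 : 0 < (S / n) `^ (1 - t) by apply: powR_gt0; rewrite divr_gt0.
  rewrite -(ler_pM2r Sn0).
  apply: (le_trans amgm).
  rewrite powRM ?invr_ge0 ?(ltW Spos) ?(ltW n0) // -powR_inv1 ?(ltW n0) //.
  rewrite -powRrM mulN1r powRN.
  have -> : n `^ (1 - t) * S `^ t * (S `^ (1 - t) * (n `^ (1 - t))^-1) = S `^ (t + (1 - t)).
    by rewrite [S `^ (t + _)]powRD ?S_neq0 ?implybT //; field; rewrite gt_eqF.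
  by rewrite addrC subrK powRr1 // ltW.
have -> : n `^ (q^-1 - r^-1) * S `^ r^-1 = (n `^ (1 - t) * S `^ t) `^ q^-1.
  rewrite powRM ?powR_ge0 // -!powRrM /t.
  by congr (n `^ _ * S `^ _); field; rewrite !gt_eqF.
apply: ge0_ler_powR => //; first by rewrite invr_ge0 ltW.
by rewrite nnegrE mulr_ge0 ?powR_ge0.
Qed.

Lemma lp_norm_le_size_infty (q : R) (s : seq R) : 0 < q ->
  (forall a, a \in s -> 0 <= a) ->
  lp_norm q%:E s <= (size s)%:R `^ q^-1 * lp_norm +oo%E s.
Proof.
move=> q0 s0; rewrite /lp_norm; set M := \big[Num.max/0]_(a <- s) a.
have M0 : 0 <= M := bigmax_ge_id _ _ _ _.
have sM a : a \in s -> a <= M by move=> sa; exact: (le_bigmax_seq _ _ _ id sa).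
apply: le_trans (_ : ((size s)%:R * M `^ q) `^ q^-1 <= _).
  apply: ge0_ler_powR; first by rewrite invr_ge0 ltW.
  - by rewrite nnegrE sumr_ge0 // => a _; exact: powR_ge0.
  - by rewrite nnegrE mulr_ge0 ?powR_ge0.
  have -> : (size s)%:R * M `^ q = \sum_(a <- s) M `^ q.
    by rewrite big_const_seq count_predT iter_addr addr0 mulr_natl.
  rewrite big_seq [X in _ <= X]big_seq; apply: ler_sum => a sa.
  by apply: ge0_ler_powR; [exact: ltW | rewrite nnegrE s0 | rewrite nnegrE | exact: sM].
by rewrite powRM ?powR_ge0 // -powRrM mulfV ?gt_eqF // powRr1.
Qed.

Lemma lp_norm_le_size_ext (q : R) (p : \bar R) (s : seq R) : 0 < q -> (q%:E <= p)%E ->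
  (forall a, a \in s -> 0 <= a) ->
  lp_norm q%:E s <= (size s)%:R `^ (q^-1 - inv_ext p) * lp_norm p s.
Proof.
case: p => [r||] // q0; rewrite ?lee_fin => qp s0.
  exact: lp_norm_le_size.
by rewrite subr0; exact: lp_norm_le_size_infty.
Qed.

Lemma lp_norm_map_le (I : eqType) (r : seq I) (q c : R) (f g : I -> R) :
  0 < q -> 0 <= c -> (forall i, 0 <= f i) -> (forall i, 0 <= g i) ->
  (forall i, i \in r -> f i <= c * g i) ->
  lp_norm q%:E (map f r) <= c * lp_norm q%:E (map g r).
Proof.
move=> q0 c0 f0 g0 fg; rewrite /lp_norm !big_map.
have cq : c = (c `^ q) `^ q^-1 by rewrite -powRrM mulfV ?gt_eqF // powRr1.
rewrite [X in X * _]cq -powRM ?powR_ge0 ?sumr_ge0 // => [|i _]; last exact: powR_ge0.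
apply: ge0_ler_powR; first by rewrite invr_ge0 ltW.
- by rewrite nnegrE sumr_ge0 // => i _; exact: powR_ge0.
- by rewrite nnegrE mulr_ge0 ?powR_ge0 ?sumr_ge0 // => i _; exact: powR_ge0.
rewrite mulr_sumr big_seq [X in _ <= X]big_seq; apply: ler_sum => i ri.
rewrite -powRM //; apply: ge0_ler_powR; rewrite ?nnegrE ?mulr_ge0 ?fg //.
exact: ltW.
Qed.

End PowerMean.

Lemma N_sumv_le (R : realType) (N : (nat -> R) -> R) (p : \bar R) (q c : R)
    (I : eqType) (r : seq I) (U W : I -> nat -> R) :
  is_norm_c00 N -> lower_estimate N p -> upper_estimate N q ->
  0 < q -> (q%:E <= p)%E -> 0 <= c ->
  (forall i, c00 (U i)) -> (forall i, c00 (W i)) ->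
  block_seq (map U r) -> block_seq (map W r) ->
  (forall i, i \in r -> N (U i) <= c * N (W i)) ->
  N (sumv (map U r)) <= c * (size r)%:R `^ (q^-1 - inv_ext p) * N (sumv (map W r)).
Proof.
move=> HN Hlo Hup q0 qp c0 cU cW bU bW UW.
apply: le_trans (Hup _ bU) _; rewrite -map_comp.
have := lp_norm_map_le q0 c0 (fun i => N_ge0 HN (cU i)) (fun i => N_ge0 HN (cW i)) UW.
move/le_trans; apply; rewrite -mulrA ler_wpM2l //.
apply: (le_trans (y := (size r)%:R `^ (q^-1 - inv_ext p) * lp_norm p (map N (map W r)))).
  rewrite -map_comp -(size_map (N \o W) r).
  by apply: lp_norm_le_size_ext => // _ /mapP[i _ ->]; exact: N_ge0.
by apply: ler_wpM2l; [exact: powR_ge0 | exact: Hlo].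
Qed.

Section Blocks.
Variables (R : realType) (L : nat -> nat).
Hypothesis L_homo : {homo L : m n / (m <= n)%N}.

Definition block_step (Q : pred nat) (c : nat -> R) (s : nat) : nat -> R :=
  fun i => c s * ind R (fun j => (L s < j <= L s.+1)%N && Q j) i.

Lemma block_unique s t i :
  (L s < i <= L s.+1)%N -> (L t < i <= L t.+1)%N -> s = t.
Proof.
move=> /andP[si iLs] /andP[ti iLt]; apply/eqP; rewrite eqn_leq.
apply/andP; split; rewrite leqNgt; apply/negP => lt_st.
- by move: (leq_ltn_trans (L_homo lt_st) si); rewrite ltnNge iLt.
- by move: (leq_ltn_trans (L_homo lt_st) ti); rewrite ltnNge iLs.
Qed.

Lemma block_cover n i : (L 0 < i <= L n)%N -> exists2 t, (t < n)%N & (L t < i <= L t.+1)%N.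
Proof.
elim: n => [|n IHn] /andP[Li iL]; first by move: (leq_ltn_trans iL Li); rewrite ltnn.
case: (leqP i (L n)) => [iLn|Lni]; last by exists n; rewrite ?Lni.
by have [t tn tB] := IHn (introT andP (conj Li iLn)); exists t => //; exact: ltnW.
Qed.

Lemma c00_block_step Q c s : c00 (block_step Q c s).
Proof.
exists (L s.+1) => i /orP[/eqP->|lt_i]; rewrite /block_step /ind; first by rewrite mulr0.
by rewrite (leqNgt i) lt_i !andbF mulr0.
Qed.

Lemma sumv_block_step Q c n t i : (L t < i <= L t.+1)%N ->
  sumv (map (block_step Q c) (iota 0 n)) i = if (t < n)%N && Q i then c t else 0.
Proof.
move=> it; rewrite /sumv big_map.
rewrite (eq_bigr (fun s => if s == t then (if Q i then c t else 0) else 0)) => [|s _].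
  case: ltnP => [tn|nt] /=; last first.
    rewrite big_seq big1 // => s; rewrite mem_iota add0n => /andP[_ sn].
    by rewrite ltn_eqF // (leq_trans sn nt).
  by rewrite (bigD1_seq t) ?mem_iota ?iota_uniq //= eqxx big1 ?addr0 // => s /negbTE ->.
rewrite /block_step /ind; have i0 : (0 < i)%N by case/andP: it => /(leq_ltn_trans (leq0n _)).
case: (boolP (L s < i <= L s.+1)%N) => [si|nsi].
  by rewrite (block_unique si it) eqxx i0; case: (Q i); rewrite ?mulr1 ?mulr0.
by rewrite andbF mulr0; case: eqP => // st; move: nsi; rewrite st it.
Qed.

Lemma sumv_block_step_out Q c n i : (i <= L 0)%N || (L n < i)%N ->
  sumv (map (block_step Q c) (iota 0 n)) i = 0.
Proof.
move=> i_out; rewrite /sumv big_map big_seq big1 // => s; rewrite mem_iota add0n => sn.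
rewrite /block_step /ind ifN ?mulr0 //; apply/negP => /andP[_ /andP[/andP[Lsi iLs] _]].
case/orP: i_out => [iL0|Lni].
  by move: (leq_ltn_trans (L_homo (leq0n s)) Lsi); rewrite ltnNge iL0.
by move: (leq_trans iLs (L_homo sn)); rewrite leqNgt Lni.
Qed.

Lemma block_seq_block_step Q c n : block_seq (map (block_step Q c) (iota 0 n)).
Proof.
split=> [_ /mapP[s _ ->]|]; first exact: c00_block_step.
move=> i j /andP[ij jn] a b; rewrite size_map size_iota in jn.
rewrite !(nth_map 0%N) ?size_iota ?(ltn_trans ij jn) // !nth_iota ?(ltn_trans ij jn) //.
rewrite /block_step /ind !add0n.
case: ifP => [/andP[_ /andP[/andP[_ aL] _]] _|]; last by rewrite mulr0 eqxx.
case: ifP => [/andP[_ /andP[/andP[Lb _] _]] _|]; last by rewrite mulr0 eqxx.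
exact: leq_ltn_trans aL (leq_ltn_trans (L_homo ij) Lb).
Qed.

End Blocks.

Section StepPreserving.
Variables (R : realType) (k : nat) (F : (nat -> R) -> nat -> R).

Definition level_value (x : nat -> R) (v : R) : R :=
  F x (head 0%N [seq j <- iota 1 k | x j == v]).

Lemma level_valueE x i : step_preserving k F -> Splus_linf k x -> (0 < i <= k)%N ->
  F x i = level_value x (x i).
Proof.
move=> Fstep xS ik; rewrite /level_value.
have : i \in [seq j <- iota 1 k | x j == x i] by rewrite mem_filter eqxx mem_iota add1n ltnS.
case E: [seq j <- _ | _] => [//|j l] _ /=.
have : j \in [seq j <- iota 1 k | x j == x i] by rewrite E mem_head.
rewrite mem_filter mem_iota add1n ltnS => /andP[/eqP xji jk].
exact: Fstep.
Qed.

End StepPreserving.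

Section SupNorm.
Variables (R : realType) (k : nat).
Implicit Types x : nat -> R.

Lemma supn_le x c : 0 <= c -> (forall i, (0 < i <= k)%N -> `|x i| <= c) -> supn k x <= c.
Proof.
move=> c0 xc; rewrite /supn big_seq; apply: bigmax_le => // i.
by rewrite mem_index_iota ltnS => /xc.
Qed.

Lemma supn_ge x i : (0 < i <= k)%N -> `|x i| <= supn k x.
Proof.
by move=> ik; apply: (le_bigmax_seq _ _ _ (fun j => `|x j|)); rewrite // mem_index_iota ltnS.
Qed.

Lemma Splus_linf_intro x : (0 < k)%N -> supported_in k x -> (forall i, 0 <= x i) ->
  (forall i, (0 < i <= k)%N -> x i <= 1) -> x 1%N = 1 -> Splus_linf k x.
Proof.
move=> k0 xk x0 x1 x11; split=> //; apply/eqP; rewrite eq_le; apply/andP; split.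
  by apply: supn_le => // i ik; rewrite ger0_norm ?x1.
by have := @supn_ge x 1%N; rewrite x11 normr1; apply.
Qed.

End SupNorm.

(* Blocks are indexed from 0 (the paper's block s is block s-1 here): block t is
   (L t, L t.+1] for t <= d, and z(m) equals 1 - t/d on it. *)
Section Core.
Variables (R : realType) (N : (nat -> R) -> R) (p : \bar R) (q : R) (d : nat) (eps theta : R).
Variables (k : nat) (F : (nat -> R) -> nat -> R) (L : nat -> nat).
Hypotheses (HN : is_norm_c00 N) (HU : one_unconditional N).
Hypotheses (Hlo : lower_estimate N p) (Hup : upper_estimate N q).
Hypotheses (q0 : 0 < q) (qp : (q%:E <= p)%E) (d0 : (0 < d)%N) (eps0 : 0 < eps) (eps1 : eps <= 1).
Hypotheses (L_homo : {homo L : m n / (m <= n)%N}) (L0 : L 0 = 0%N) (L1_gt0 : (0 < L 1)%N).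
Hypothesis L_last : L d.+1 = k.
Hypotheses (Fmap : maps_into N k F) (Fstep : step_preserving k F).
Hypothesis Fom : omega_le N k F d%:R^-1 (eps / 8).
Hypotheses (theta0 : 0 < theta) (thetaD : theta * d%:R `^ (q^-1 - inv_ext p) <= eps / 16).
Hypothesis L_growth : forall s, (0 < s <= d)%N ->
  (2 / theta + 2) * psi N (L s) + 1 <= psi N (L s.+1).

Let L' s := L s.+1.
Let z := zvec R d L.
Let zval (s : nat) : R := 1 - s%:R / d%:R.

Lemma block_in_range t i : (t <= d)%N -> (L t < i <= L t.+1)%N -> (0 < i <= k)%N.
Proof.
move=> td /andP[Lti iLt]; rewrite (leq_ltn_trans (leq0n _) Lti) -L_last /=.
exact: leq_trans iLt (L_homo (td : (t.+1 <= d.+1)%N)).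
Qed.

Lemma block_of i : (0 < i <= k)%N -> exists2 t, (t <= d)%N & (L t < i <= L t.+1)%N.
Proof. by rewrite -L_last -{1}L0 => /block_cover [t td it]; exists t. Qed.

Lemma zvecE : z = sumv (map (block_step L xpredT zval) (iota 0 d)).
Proof.
apply/funext => i; rewrite /z /zvec /sumv big_map big_add1 /= /index_iota subn0.
apply: eq_bigr => s _; rewrite /zval /block_step /ind_oc; congr (_ * ind R _ _).
by apply/funext => j; case: s => [|s]; rewrite ?L0 andbT.
Qed.

Lemma z_block t i : (t <= d)%N -> (L t < i <= L t.+1)%N -> z i = zval t.
Proof.
move=> td it; rewrite zvecE (sumv_block_step _ _ _ _ it) //= andbT.
case: ltnP => // dt; have -> : t = d by apply/eqP; rewrite eqn_leq td.
by rewrite /zval divff ?subrr // pnatr_eq0 -lt0n.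
Qed.

Lemma sumv_block_out Q (c : nat -> R) i : ~~ (0 < i <= k)%N ->
  sumv (map (block_step L Q c) (iota 0 d)) i = 0.
Proof.
rewrite notin_range => i_out; apply: (sumv_block_step_out L_homo).
case/orP: i_out => [/eqP->|ki]; first by rewrite L0.
by rewrite (leq_ltn_trans _ ki) ?orbT // -L_last L_homo.
Qed.

Lemma z_out i : ~~ (0 < i <= k)%N -> z i = 0.
Proof. by rewrite zvecE; exact: sumv_block_out. Qed.

Lemma zval_ge0 t : (t <= d)%N -> 0 <= zval t.
Proof. by move=> td; rewrite subr_ge0 ler_pdivrMr ?ltr0n // mul1r ler_nat. Qed.

Lemma zval_le1 t : zval t <= 1.
Proof. by rewrite lerBlDr lerDl divr_ge0. Qed.

Lemma zval_pred t : (0 < t)%N -> zval t.-1 = zval t + d%:R^-1.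
Proof.
case: t => // t _; rewrite /zval /= -addn1 natrD.
by field; rewrite pnatr_eq0 -lt0n.
Qed.

Lemma k_gt0 : (0 < k)%N.
Proof. by rewrite -L_last (leq_trans L1_gt0) ?L_homo. Qed.

Lemma one_in_block0 : (L 0 < 1 <= L 1)%N.
Proof. by rewrite L0. Qed.

Lemma z_Splus : Splus_linf k z.
Proof.
apply: Splus_linf_intro k_gt0 _ _ _ _.
- by move=> i i_out; apply: z_out; rewrite notin_range.
- move=> i; case: (boolP (0 < i <= k)%N) => [/block_of [t td it]|/z_out ->] //.
  by rewrite (z_block td it) zval_ge0.
- by move=> i /block_of [t td it]; rewrite (z_block td it) zval_le1.
- by rewrite (z_block (leq0n d) one_in_block0) /zval mul0r subr0.
Qed.

Let alpha t := level_value k F z (zval t).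

Lemma Fz_block t i : (t <= d)%N -> (L t < i <= L t.+1)%N -> F z i = alpha t.
Proof.
move=> td it; rewrite (level_valueE Fstep z_Splus (block_in_range td it)).
by rewrite (z_block td it).
Qed.

Let h i := F z i - alpha d * ind R (fun i => (i <= k)%N) i.

Lemma h_block t i : (t <= d)%N -> (L t < i <= L t.+1)%N -> h i = alpha t - alpha d.
Proof.
move=> td it; have /andP[i0 ik] := block_in_range td it.
by rewrite /h (Fz_block td it) /ind i0 ik mulr1.
Qed.

Lemma h_out i : ~~ (0 < i <= k)%N -> h i = 0.
Proof.
have [Fz_supp _ _] := Fmap z_Splus; move=> i_out.
by rewrite /h /ind Fz_supp -?notin_range // (negbTE i_out) mulr0 subrr.
Qed.

Lemma c00_h : c00 h.
Proof. by exists k => i; rewrite -notin_range => /h_out. Qed.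

Lemma L'_homo : {homo L' : m n / (m <= n)%N}.
Proof. by move=> m n mn; apply: L_homo. Qed.

Lemma sumv_shift_block Q (c : nat -> R) t i : (t <= d)%N -> (L t < i <= L t.+1)%N ->
  sumv (map (block_step L' Q c) (iota 0 d)) i = if (0 < t)%N && Q i then c t.-1 else 0.
Proof.
case: t => [_ it|t td it] /=.
  by apply: (sumv_block_step_out L'_homo); case/andP: it => _ ->.
by rewrite (sumv_block_step L'_homo _ _ _ it) td.
Qed.

Lemma sumv_shift_out Q (c : nat -> R) i : ~~ (0 < i <= k)%N ->
  sumv (map (block_step L' Q c) (iota 0 d)) i = 0.
Proof.
rewrite notin_range => i_out; apply: (sumv_block_step_out L'_homo).
by case/orP: i_out => [/eqP->|ki]; rewrite ?leq0n // /L' L_last ki orbT.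
Qed.

Lemma N_sumv_shift_le Q1 Q2 (c : nat -> R) : half_psi N Q2 ->
  N (sumv (map (block_step L Q1 c) (iota 0 d))) <=
  eps / 16 * N (sumv (map (block_step L' Q2 c) (iota 0 d))).
Proof.
move=> HQ2.
apply: le_trans (N_sumv_le (c := theta) HN Hlo Hup q0 qp (ltW theta0) (c00_block_step _ _ _)
  (c00_block_step _ _ _) (block_seq_block_step L_homo Q1 c d)
  (block_seq_block_step L'_homo Q2 c d) _) _ => [s|].
  rewrite mem_iota add0n => sd; rewrite /block_step !(N_scale HN _ (c00_ind_block _ _ _ _)).
  rewrite mulrCA ler_wpM2l //.
  apply: le_trans (psi_gap_le HN HU HQ2 (L_homo (leqnSn _)) theta0 (L_growth (s := s.+1) sd)).
  by apply: (N_ind_le HN HU (n := L s.+1)) => [i /andP[/andP[_ ->]]|].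
rewrite size_iota ler_wpM2r //; apply/(N_ge0 HN)/c00_sumv => _ /mapP[s _ ->].
exact: c00_block_step.
Qed.

Section Half.
Variable Q : pred nat.
Hypotheses (HQ : half_psi N Q) (HQc : half_psi N (predC Q)).

Let zQ i := z i + d%:R^-1 * (if (L 1 < i <= k)%N && ~~ Q i then 1 else 0).

Let level t i := if (0 < t)%N && ~~ Q i then t.-1 else t.

Lemma level_le t i : (level t i <= t)%N.
Proof. by rewrite /level; case: ifP => // _; exact: leq_pred. Qed.

Lemma zQ_block t i : (t <= d)%N -> (L t < i <= L t.+1)%N -> zQ i = zval (level t i).
Proof.
move=> td it; have /andP[_ ik] := block_in_range td it.
rewrite /zQ /level (z_block td it) ik andbT.
case: t td it => [|t] td /andP[Lti iLt] /=.
  by rewrite ltnNge iLt /= mulr0 addr0.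
rewrite (leq_ltn_trans (L_homo (ltn0Sn t)) Lti) /=.
by case: (Q i) => /=; rewrite ?mulr0 ?addr0 // mulr1 (zval_pred (ltn0Sn t)).
Qed.

Lemma zQ_out i : ~~ (0 < i <= k)%N -> zQ i = 0.
Proof.
move=> i_out; rewrite /zQ z_out // add0r.
suff -> : (L 1 < i <= k)%N = false by rewrite mulr0.
by move: i_out; rewrite notin_range => /orP[/eqP->|ki]; rewrite ?ltn0 // (leqNgt i) ki andbF.
Qed.

Lemma zQ_Splus : Splus_linf k zQ.
Proof.
apply: Splus_linf_intro k_gt0 _ _ _ _.
- by move=> i i_out; apply: zQ_out; rewrite notin_range.
- move=> i; case: (boolP (0 < i <= k)%N) => [/block_of [t td it]|/zQ_out ->] //.
  by rewrite (zQ_block td it) zval_ge0 // (leq_trans (level_le t i)).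
- by move=> i /block_of [t td it]; rewrite (zQ_block td it) zval_le1.
- by rewrite (zQ_block (leq0n d) one_in_block0) /zval mul0r subr0.
Qed.

Lemma zQ_near : supn k (fun i => zQ i - z i) <= d%:R^-1.
Proof.
apply: supn_le => [|i _]; first by rewrite invr_ge0.
rewrite /zQ addrC addKr normrM ger0_norm ?invr_ge0 // ler_piMr ?invr_ge0 //.
by case: ifP; rewrite ?normr1 ?normr0.
Qed.

Let beta t := level_value k F zQ (zval t).

Let g i := F zQ i - F z i.

Lemma g_block t i : (t <= d)%N -> (L t < i <= L t.+1)%N -> g i = beta (level t i) - alpha t.
Proof.
move=> td it; rewrite /g (Fz_block td it).
by rewrite (level_valueE Fstep zQ_Splus (block_in_range td it)) (zQ_block td it).
Qed.

Lemma g_out i : ~~ (0 < i <= k)%N -> g i = 0.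
Proof.
have [Fz_supp _ _] := Fmap z_Splus; have [FzQ_supp _ _] := Fmap zQ_Splus.
by rewrite notin_range => i_out; rewrite /g Fz_supp ?FzQ_supp ?subrr.
Qed.

Lemma c00_g : c00 g.
Proof. by exists k => i; rewrite -notin_range => /g_out. Qed.

Lemma N_g_le : N g <= eps / 8.
Proof. exact: Fom zQ_Splus z_Splus zQ_near. Qed.

Let c1 s := beta s - alpha s.+1.
Let c2 s := alpha s.+1 - alpha d.
Let A1 := sumv (map (block_step L Q c1) (iota 0 d)).
Let A2 := sumv (map (block_step L Q c2) (iota 0 d)).
Let W1 := sumv (map (block_step L' (predC Q) c1) (iota 0 d)).
Let W2 := sumv (map (block_step L' Q c2) (iota 0 d)).
Let hQ i := if Q i then h i else 0.
Let gQ i := if Q i && (i <= L d)%N then g i else 0.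

Lemma hQ_decomp : hQ = fun i => A1 i + A2 i - gQ i.
Proof.
apply/funext => i; case: (boolP (0 < i <= k)%N) => [/block_of [t td it]|i_out]; last first.
  by rewrite /hQ /gQ /A1 /A2 h_out ?g_out ?sumv_block_out // !if_same addr0 subr0.
rewrite /hQ /gQ /A1 /A2 !(sumv_block_step L_homo _ _ _ it) (h_block td it) (g_block td it).
case: (boolP (Q i)) => Qi; last by rewrite !andbF addr0 subr0.
rewrite /level Qi andbF /c1 /c2; case: ltnP => [tlt|dt].
  by rewrite (leq_trans (proj2 (andP it)) (L_homo tlt)) /=; ring.
have td' : t = d by apply/eqP; rewrite eqn_leq td.
move: it; rewrite td' => /andP[Ldi _].
by rewrite /= leqNgt Ldi subrr add0r subr0.
Qed.

Lemma W1E : W1 = fun i => if ~~ Q i && (L 1 < i)%N then g i else 0.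
Proof.
apply/funext => i; case: (boolP (0 < i <= k)%N) => [/block_of [t td it]|i_out]; last first.
  by rewrite /W1 sumv_shift_out ?g_out ?if_same.
rewrite /W1 (sumv_shift_block _ _ td it) (g_block td it) /level.
case: t td it => [|t] td /andP[Lti iLt] /=; first by rewrite ltnNge iLt andbF.
by rewrite (leq_ltn_trans (L_homo (ltn0Sn t)) Lti) andbT; case: (Q i).
Qed.

Lemma W2E : W2 = fun i => if Q i && (L 1 < i)%N then h i else 0.
Proof.
apply/funext => i; case: (boolP (0 < i <= k)%N) => [/block_of [t td it]|i_out]; last first.
  by rewrite /W2 sumv_shift_out ?h_out ?if_same.
rewrite /W2 (sumv_shift_block _ _ td it) (h_block td it).
case: t td it => [|t] td /andP[Lti iLt] /=; first by rewrite ltnNge iLt andbF.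
by rewrite (leq_ltn_trans (L_homo (ltn0Sn t)) Lti) andbT.
Qed.

Lemma N_hQ_le : N hQ <= eps / 4.
Proof.
have cA (c : nat -> R) : c00 (sumv (map (block_step L Q c) (iota 0 d))).
  by apply: c00_sumv => _ /mapP[t _ ->]; exact: c00_block_step.
have chQ : c00 hQ := c00_restrict _ c00_h.
have cgQ : c00 gQ := c00_restrict _ c00_g.
have decomp : N hQ <= N A1 + N A2 + N gQ.
  rewrite hQ_decomp; apply: le_trans (N_sub_le HN (c00_add (cA c1) (cA c2)) cgQ) _.
  by rewrite lerD2r; apply: N_add_le.
have gQ_le : N gQ <= eps / 8.
  exact: le_trans (N_restrict_le HN HU (fun i => Q i && (i <= L d)%N) c00_g) N_g_le.
have A1_le : N A1 <= eps / 16 * (eps / 8).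
  apply: le_trans (N_sumv_shift_le _ c1 HQc) _; rewrite -/W1 W1E.
  apply: ler_wpM2l; first by rewrite divr_ge0 // ltW.
  exact: le_trans (N_restrict_le HN HU (fun i => ~~ Q i && (L 1 < i)%N) c00_g) N_g_le.
have A2_le : N A2 <= eps / 16 * N hQ.
  apply: le_trans (N_sumv_shift_le _ c2 HQ) _; rewrite -/W2 W2E.
  apply: ler_wpM2l; first by rewrite divr_ge0 // ltW.
  have -> : (fun i => if Q i && (L 1 < i)%N then h i else 0) =
            (fun i => if (L 1 < i)%N then hQ i else 0).
    by apply/funext => i; rewrite /hQ; case: (Q i); case: (L 1 < i)%N.
  by move: (N_restrict_le HN HU (fun i => (L 1 < i)%N) chQ).
have hQ0 := N_ge0 HN chQ.
have := ler_piMl hQ0 eps1; have := ler_piMl (ltW eps0) eps1; lra.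
Qed.

End Half.

Lemma N_h_le P : half_psi N P -> half_psi N (predC P) -> N h <= eps / 2.
Proof.
move=> HP HPc; have HPcc : half_psi N (predC (predC P)).
  move=> n; have -> : (fun i => (i <= n)%N && predC (predC P) i) = fun i => (i <= n)%N && P i.
    by apply/funext => i; rewrite /= negbK.
  exact: HP.
have -> : h = fun i => (if P i then h i else 0) + (if predC P i then h i else 0).
  by apply/funext => i; rewrite /=; case: (P i); rewrite ?addr0 ?add0r.
apply: le_trans (N_add_le HN (c00_restrict _ c00_h) (c00_restrict _ c00_h)) _.
by have := N_hQ_le HP HPc; have := N_hQ_le HPc HPcc; lra.
Qed.

Lemma alpha_ge0 t : 0 <= alpha t.
Proof. by have [_ Fz0 _] := Fmap z_Splus; exact: Fz0. Qed.

Lemma N_Fz_sub_le P : normalized_basis N -> half_psi N P -> half_psi N (predC P) ->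
  N (fun i => F z i - (psi N k)^-1 * ind R (fun i => (i <= k)%N) i) <= eps.
Proof.
move=> Hbas HP HPc; have [Fz_supp _ Fz1] := Fmap z_Splus.
have psi_gt0 : 0 < psi N k by apply: lt_le_trans (psi_ge1 HN HU Hbas k_gt0).
apply: le_trans (N_sub_normalized_le HN _ _ Fz1 psi_gt0 (alpha_ge0 d)) _.
- by exists k.
- exact: (@c00_ind _ k).
by have := N_h_le HP HPc; rewrite /h; lra.
Qed.

End Core.

Section Breakpoints.
Variables (kseq m : nat -> nat) (d k : nat).
Hypotheses (kseq1 : (0 < kseq 1)%N) (kseq_inc : forall j, (1 <= j)%N -> (kseq j < kseq j.+1)%N).
Hypothesis m_kseq : forall s, (1 <= s <= d)%N -> exists j, (1 <= j)%N /\ m s = kseq (2 * j)%N.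
Hypothesis m_inc : forall s, (1 <= s < d)%N -> (m s < m s.+1)%N.
Hypotheses (k_kseq : exists j, (1 <= j)%N /\ k = kseq (2 * j)%N) (m_lt_k : (m d < k)%N).

Definition breaks s := if s == 0%N then 0%N else if (s <= d)%N then m s else k.

Lemma kseq_homo a b : (0 < a)%N -> (a <= b)%N -> (kseq a <= kseq b)%N.
Proof.
case: a => // a _; case: b => // b ab.
by apply: (homo_leq (f := fun j => kseq j.+1) leqnn leq_trans) => // j; exact/ltnW/kseq_inc.
Qed.

Lemma breaks_kseq s : (0 < s <= d.+1)%N -> exists2 j, (0 < j)%N & breaks s = kseq j.
Proof.
rewrite /breaks; case: s => // s /= sd; case: ifP => [sd'|_].
  by have [j [j1 ->]] := m_kseq (s := s.+1) sd'; exists (2 * j)%N => //; rewrite muln_gt0.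
by have [j [j1 ->]] := k_kseq; exists (2 * j)%N => //; rewrite muln_gt0.
Qed.

Lemma breaks_lt s : (0 < s <= d)%N -> (breaks s < breaks s.+1)%N.
Proof.
case: s => // s /andP[_ sd]; rewrite /breaks /= sd.
case: ifP => [s1d|/negbT]; first exact: m_inc.
by rewrite -ltnNge ltnS => ds; rewrite (@anti_leq s.+1 d) ?sd.
Qed.

Lemma breaks_homo : {homo breaks : a b / (a <= b)%N}.
Proof.
apply: homo_leq => [//|? ? ?|s]; first exact: leq_trans.
case: (posnP s) => [->//|s0]; case: (leqP s d) => [sd|ds]; first by rewrite ltnW ?breaks_lt ?s0.
have -> : breaks s = k by rewrite /breaks gtn_eqF // leqNgt ds.
by rewrite /breaks /= ltnNge (ltnW ds).
Qed.

Lemma breaks_gt0 : (0 < breaks 1)%N.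
Proof. by have [j j0 ->] := breaks_kseq (s := 1) isT; exact: leq_trans (kseq_homo _ j0). Qed.

Lemma breaks_last : breaks d.+1 = k.
Proof. by rewrite /breaks /= ltnn. Qed.

Lemma breaks_m s : (0 < s <= d)%N -> breaks s = m s.
Proof. by case: s => // s /andP[_ sd]; rewrite /breaks /= sd. Qed.

Lemma zvec_breaks (R : realType) : zvec R d m = zvec R d breaks.
Proof.
apply/funext => i; apply: eq_big_nat => s; rewrite ltnS => sd; rewrite (breaks_m sd).
by case: s sd => [|[|s]] // /andP[_ sd]; rewrite breaks_m //= ltnW.
Qed.

Lemma breaks_growth (R : realType) (u : nat -> R) (G : R) : 1 <= G -> (forall n, 0 <= u n) ->
  (forall j, (1 <= j)%N -> G * u (kseq j) + 1 <= u (kseq j.+1)) ->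
  forall s, (0 < s <= d)%N -> G * u (breaks s) + 1 <= u (breaks s.+1).
Proof.
move=> G1 u0 grow s sd; have := breaks_lt sd.
have [a a0 ->] : exists2 a, (0 < a)%N & breaks s = kseq a.
  by apply: breaks_kseq; case/andP: sd => -> /leqW.
have [b b0 ->] : exists2 b, (0 < b)%N & breaks s.+1 = kseq b.
  by apply: breaks_kseq; rewrite ltnS; case/andP: sd.
move=> kab; have ab : (a < b)%N.
  by rewrite ltnNge; apply/negP => /(kseq_homo b0); rewrite leqNgt kab.
case: a b a0 b0 ab {kab} => // a [] // b _ _ ab.
apply: (homo_ltn (f := fun j => kseq j.+1) (r := fun x y => G * u x + 1 <= u y)) => // [y x z|j].
  by move=> xy yz; have := u0 y; nra.
exact: grow.
Qed.

End Breakpoints.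

Theorem theorem6p1 (R : realType) (N : (nat -> R) -> R) (p : \bar R) (q : R)
  (d : nat) (eps : R) (P : nat -> bool) (kseq : nat -> nat)
  (m : nat -> nat) (k : nat) (F : (nat -> R) -> (nat -> R)) :
  is_norm_c00 N -> normalized_basis N -> one_unconditional N -> ~ equiv_c0 N ->
  (1 <= q) -> (q%:E <= p)%E ->
  lower_estimate N p -> upper_estimate N q ->
  (0 < d)%N -> 0 < eps -> eps <= 1 ->
  (0 < kseq 1)%N -> (forall j, (1 <= j)%N -> (kseq j < kseq j.+1)%N) ->
  assumptionA N p q d (eps / 4) P kseq ->
  (forall s, (1 <= s <= d)%N -> exists j, (1 <= j)%N /\ m s = kseq (2 * j)%N) ->
  (forall s, (1 <= s < d)%N -> (m s < m s.+1)%N) ->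
  (exists j, (1 <= j)%N /\ k = kseq (2 * j)%N) -> (m d < k)%N ->
  maps_into N k F -> step_preserving k F -> omega_le N k F (d%:R^-1) (eps / 8) ->
  N (fun i => F (zvec R d m) i - (psi N k)^-1 * ind R (fun i => (i <= k)%N) i) <= eps.
Proof.
move=> HN Hbas HU _ q1 qp Hlo Hup d0 eps0 eps1 k1 kinc [HP _ grow] m_kseq m_inc k_kseq m_k.
move=> Fmap Fstep Fom; pose D := d%:R `^ (q^-1 - inv_ext p).
have D0 : 0 < D by apply: powR_gt0; rewrite ltr0n.
have q0 : 0 < q by apply: lt_le_trans q1.
have [HP1 HP2] : half_psi N P /\ half_psi N (predC P).
  by split=> n; have := HP n; rewrite /psiP le_min => /andP[].
pose theta := eps / (16 * D).
have theta0 : 0 < theta by rewrite divr_gt0 ?mulr_gt0.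
have thetaD : theta * D <= eps / 16 by rewrite mulrAC -mulf_div divff ?gt_eqF ?mulr1.
have G1 : 1 <= 2 / theta + 2 by apply: ler_wpDl; [rewrite divr_ge0 // ltW | lra].
have G_eq : 8 * D / (eps / 4) + 2 = 2 / theta + 2 by rewrite /theta; field; rewrite !gt_eqF.
rewrite G_eq in grow; rewrite (zvec_breaks m d k R).
exact: (N_Fz_sub_le HN HU Hlo Hup q0 qp d0 eps0 eps1 (breaks_homo m_inc m_k) erefl
  (breaks_gt0 k1 kinc m_kseq k_kseq) (breaks_last m d k) Fmap Fstep Fom theta0 thetaD
  (breaks_growth kinc m_kseq m_inc k_kseq m_k G1 (psi_ge0 HN) grow) Hbas HP1 HP2).
Qed.
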